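(* Let $V$ be a real symmetric positive definite $2n\times2n$ matrix and let $\nu_{\min}(V)$ be its smallest symplectic eigenvalue. Then $$\nu_{\min}(V)=\max\{\lambda\ge0: V\ge i\lambda\Omega\}=\min\{\mathrm{Tr}(WV): W\ \text{a }2n\times2n\text{ complex Hermitian matrix},\ W\ge0,\ \mathrm{Tr}(W\,i\Omega)=1\}.$$
   Context: $\Omega=\begin{pmatrix}0&\mathbb 1_n\\-\mathbb 1_n&0\end{pmatrix}$. By Williamson's theorem, for every real symmetric positive definite $2n\times2n$ matrix $V$ there is a real matrix $S$ with $S\Omega S^T=\Omega$ (symplectic) such that $SVS^T=D\oplus D$ with $D=\mathrm{diag}(\nu_1(V),\dots,\nu_n(V))$, $\nu_j(V)>0$; the $\nu_j(V)$ are the symplectic eigenvalues of $V$. Matrix inequalities refer to the positive semidefinite (Löwner) order on Hermitian matrices. *)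

(* Complex numbers: an arbitrary numClosedFieldType C
   (e.g. the complex numbers); "real" = Num.real elements of C. *)
From HB Require Import structures.
From mathcomp Require Import all_boot all_order all_algebra.
From mathcomp Require Export sesquilinear spectral.
Set Implicit Arguments. Unset Strict Implicit. Unset Printing Implicit Defensive.
Import Order.TTheory GRing.Theory Num.Theory.
Local Open Scope ring_scope.
Local Open Scope sesquilinear_scope.

Section Defs.
Variable C : numClosedFieldType.

Definition Omega (n : nat) : 'M[C]_(n + n) :=
  block_mx 0 1%:M (- 1%:M) 0.

Definition real_mx m p (A : 'M[C]_(m, p)) : Prop := forall i j, A i j \is Num.real.

Definition real_sym_pd m (V : 'M[C]_m) : Prop :=
  real_mx V /\ V^T = V /\
  forall v : 'cV[C]_m, real_mx v -> v != 0 -> 0 < (v^T *m V *m v) 0 0.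

Definition hermitian_mx m (A : 'M[C]_m) : Prop := A ^t* = A.
Definition psd_mx m (A : 'M[C]_m) : Prop :=
  hermitian_mx A /\ forall v : 'cV[C]_m, 0 <= ((v ^t*) *m A *m v) 0 0.
Definition loewner_ge m (A B : 'M[C]_m) : Prop := psd_mx (A - B).

Definition symplectic n (S : 'M[C]_(n + n)) : Prop :=
  real_mx S /\ S *m Omega n *m S^T = Omega n.

(* d lists the symplectic eigenvalues of V (Williamson normal form):
   d_j > 0 and there is a real symplectic S with S V S^T = D (+) D. *)
Definition williamson n (V : 'M[C]_(n + n)) (d : 'rV[C]_n) : Prop :=
  (forall j, 0 < d 0 j) /\
  exists S, symplectic S /\
    S *m V *m S^T = block_mx (diag_mx d) 0 0 (diag_mx d).

Definition is_nu_min n (V : 'M[C]_(n + n)) (m : C) : Prop :=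
  exists d, williamson V d /\ (exists j, d 0 j = m) /\ (forall j, m <= d 0 j).

Definition is_max (P : C -> Prop) (m : C) : Prop := P m /\ forall x, P x -> x <= m.
Definition is_min (P : C -> Prop) (m : C) : Prop := P m /\ forall x, P x -> m <= x.

End Defs.

From mathcomp Require Import all_boot all_order all_algebra.
From mathcomp Require Import sesquilinear spectral ring.
Set Implicit Arguments. Unset Strict Implicit. Unset Printing Implicit Defensive.
Import Order.TTheory GRing.Theory Num.Theory Num.Def.
Local Open Scope ring_scope.
Local Open Scope sesquilinear_scope.

(* Congruence by the real symplectic matrix S of Williamson's normal form fixes
   Omega, so V >= i lam Omega iff D (+) D >= i lam Omega.  The latter holds for
   0 <= lam <= nu_min, coordinatewise by
     d (|a|^2 + |b|^2) - i lam (a^* b - b^* a)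
       = (d - lam) (|a|^2 + |b|^2) + lam |a - i b|^2.
   Testing with S^T u, for u the eigenvector of i Omega on the coordinate pair
   carrying nu_min, rules out lam > nu_min and yields the trace minimiser
   W = (S^T u) (S^T u)^* / 2.  Conversely Tr (W V) >= nu_min for every feasible
   W because Tr (W (V - i nu_min Omega)) >= 0, a trace of a product of psd
   matrices. *)

Section QuadraticForms.
Variable C : numClosedFieldType.

Definition qform m (A : 'M[C]_m) (v : 'cV[C]_m) : C := (v^t* *m A *m v) 0 0.

Lemma qformB m (A B : 'M[C]_m) v : qform (A - B) v = qform A v - qform B v.
Proof. by rewrite /qform mulmxBr mulmxBl !mxE. Qed.

Lemma qformZ m (A : 'M[C]_m) c v : qform (c *: A) v = c * qform A v.
Proof. by rewrite /qform -scalemxAr -scalemxAl !mxE. Qed.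

Lemma real_mx_conj m p (A : 'M[C]_(m, p)) : real_mx A -> A ^ conjC = A.
Proof. by move=> Ar; apply/matrixP => i j; rewrite mxE; apply/CrealP. Qed.

Lemma adjmx_mul m p q (A : 'M[C]_(m, p)) (B : 'M[C]_(p, q)) :
  (A *m B)^t* = B^t* *m A^t*.
Proof. by rewrite trmx_mul map_mxM. Qed.

Lemma qform_congr m p (S : 'M[C]_(p, m)) (A : 'M[C]_m) w :
  real_mx S -> qform A (S^T *m w) = qform (S *m A *m S^T) w.
Proof.
by move=> /real_mx_conj Sc; rewrite /qform trmx_mul map_mxM trmxK Sc !mulmxA.
Qed.

Lemma qform_row m (P A : 'M[C]_m) i :
  (P *m A *m P^t*) i i = qform A ((row i P)^t*).
Proof.
rewrite /qform trmxCK -row_mul mxE [RHS]mxE.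
by apply: eq_bigr => k _; rewrite !mxE.
Qed.

Lemma psd_congr m (S A : 'M[C]_m) :
  real_mx S -> S \in unitmx -> psd_mx (S *m A *m S^T) -> psd_mx A.
Proof.
move=> Sr Su [SAh SAge0]; have StU : S^T \in unitmx by rewrite unitmx_tr.
split.
  apply: (can_inj (mulKmx Su)); apply: (can_inj (mulmxK StU)).
  rewrite -[RHS]SAh !adjmx_mul mulmxA; congr (_ *m _ *m _).
    by rewrite trmxK real_mx_conj.
  by rewrite -map_trmx real_mx_conj.
move=> v; rewrite -(mulKVmx StU v) -[_ 0 0]/(qform _ _) (qform_congr _ _ Sr).
exact: SAge0.
Qed.

(* Diagonalise [W] by a unitary [P]: [tr (W A)] is then a sum of eigenvalues
   of [W] times diagonal entries of [P A P^*], i.e. values of the form of [A]. *)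
Lemma mxtrace_mul_psd_ge0 m (W A : 'M[C]_m) :
  psd_mx W -> psd_mx A -> 0 <= \tr (W *m A).
Proof.
move=> [Wh Wge0] [_ Age0].
have /orthomx_spectralP : W \is normalmx by rewrite qualifE /= Wh.
set P := spectralmx W; set e := spectral_diag W => WE.
rewrite invmx_unitary ?spectral_unitarymx // in WE.
have PPt : P *m P^t* = 1%:M by apply/unitarymxP; apply: spectral_unitarymx.
have e_ge0 i : 0 <= e 0 i.
  have <- : (P *m W *m P^t*) i i = e 0 i.
    by rewrite WE !mulmxA PPt mul1mx -!mulmxA PPt mulmx1 mxE eqxx mulr1n.
  by rewrite qform_row; apply: Wge0.
rewrite WE -!mulmxA mxtrace_mulC -!mulmxA mul_diag_mx /mxtrace.
apply: sumr_ge0 => i _; rewrite mxE mulr_ge0 //.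
by rewrite !mulmxA qform_row; apply: Age0.
Qed.

Lemma psd_scale_rank1 m (c : C) (y : 'cV[C]_m) :
  0 <= c -> psd_mx (c *: (y *m y^t*)).
Proof.
move=> c_ge0; have cR : c \is Num.real by apply: ger0_real.
split.
  rewrite /hermitian_mx linearZ /= map_mxZ trmx_mul map_mxM trmxCK.
  by rewrite /= (conj_Creal cR).
move=> v; rewrite -[X in 0 <= X]/(qform _ v) qformZ mulr_ge0 //.
have -> : qform (y *m y^t*) v = (v^t* *m y) 0 0 * ((v^t* *m y) 0 0)^*.
  rewrite /qform mulmxA -(mulmxA _ (y^t*)) mxE big_ord1; congr (_ * _).
  rewrite !mxE rmorph_sum; apply: eq_bigr => k _.
  by rewrite !mxE rmorphM /= conjCK mulrC.
exact: mul_conjC_ge0.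
Qed.

Lemma mxtrace_mul_rank1 m (y : 'cV[C]_m) (A : 'M[C]_m) :
  \tr (y *m y^t* *m A) = qform A y.
Proof. by rewrite -mulmxA mxtrace_mulC trace_mx11. Qed.

Lemma le_mxtrace_loewner_ge m (V X W : 'M[C]_m) (lam : C) :
  loewner_ge V (lam *: X) -> psd_mx W -> \tr (W *m X) = 1 ->
  lam <= \tr (W *m V).
Proof.
move=> VX W_psd WX1; have := mxtrace_mul_psd_ge0 W_psd VX.
by rewrite mulmxBr linearB /= -scalemxAr mxtraceZ WX1 mulr1 subr_ge0.
Qed.

End QuadraticForms.

Section SymplecticForm.
Variables (C : numClosedFieldType) (n : nat).
Local Notation Om := (Omega C n).

Lemma Omega_sqr : Om *m Om = - 1%:M.
Proof.
rewrite /Omega mulmx_block !mulmx0 !mul0mx !mulmx1 !mul1mx !addr0 !add0r.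
by rewrite [in RHS](scalar_mx_block n n (1 : C)) opp_block_mx oppr0.
Qed.

Lemma adjmx_Omega : Om^t* = - Om.
Proof.
rewrite /Omega tr_block_mx !trmx0 trmx1 linearN /= trmx1.
by rewrite map_block_mx map_mx0 map_mxN map_mx1 opp_block_mx oppr0 opprK.
Qed.

Lemma symplectic_unitmx (S : 'M[C]_(n + n)) : symplectic S -> S \in unitmx.
Proof.
move=> [_ SOSt]; suff /mulmx1_unit[] : S *m (Om *m S^T *m - Om) = 1%:M by [].
by rewrite !mulmxA SOSt mulmxN Omega_sqr opprK.
Qed.

Lemma qform_block (x y : 'cV[C]_n) (P Q R T : 'M[C]_n) :
  qform (block_mx P Q R T) (col_mx x y) =
  qform P x + (y^t* *m R *m x) 0 0 + ((x^t* *m Q *m y) 0 0 + qform T y).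
Proof.
by rewrite /qform tr_col_mx map_row_mx mul_row_block mul_row_col !mulmxDl !mxE.
Qed.

Lemma qform_diag_block (d : 'rV[C]_n) x y :
  qform (block_mx (diag_mx d) 0 0 (diag_mx d)) (col_mx x y) =
  \sum_j d 0 j * ((x j 0)^* * x j 0 + (y j 0)^* * y j 0).
Proof.
rewrite qform_block /qform !mulmx0 !mul0mx !mxE add0r addr0 -big_split /=.
apply: eq_bigr => j _; rewrite !mul_mx_diag !mxE; ring.
Qed.

Lemma qform_Omega (x y : 'cV[C]_n) :
  qform Om (col_mx x y) = \sum_j ((x j 0)^* * y j 0 - (y j 0)^* * x j 0).
Proof.
rewrite qform_block /qform !mulmx0 !mul0mx !mulmxN !mulNmx !mulmx1 !mxE.
by rewrite sub0r addr0 addrC -sumrB; apply: eq_bigr => j _; rewrite !mxE.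
Qed.

Lemma psd_diag_block_subOmega (d : 'rV[C]_n) (nu : C) :
  0 <= nu -> (forall j, nu <= d 0 j) ->
  psd_mx (block_mx (diag_mx d) 0 0 (diag_mx d) - ('i * nu) *: Om).
Proof.
move=> nu_ge0 le_nu_d; have nuR : nu \is Num.real by apply: ger0_real.
have dR j : d 0 j \is Num.real by apply: ger0_real; apply: le_trans (le_nu_d j).
split.
  rewrite /hermitian_mx linearB /= linearZ /= map_mxB map_mxZ adjmx_Omega.
  rewrite rmorphM /= conjCi (conj_Creal nuR) mulNr scalerN scaleNr opprK.
  congr (_ - _); rewrite tr_block_mx !trmx0 tr_diag_mx map_block_mx !map_mx0.
  rewrite map_diag_mx; congr (block_mx (diag_mx _) _ _ (diag_mx _));
    by apply/rowP => j; rewrite mxE; apply: conj_Creal.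
have term_ge0 (a b : C) j :
    0 <= d 0 j * (a^* * a + b^* * b) - 'i * nu * (a^* * b - b^* * a).
  have -> : d 0 j * (a^* * a + b^* * b) - 'i * nu * (a^* * b - b^* * a) =
      (d 0 j - nu) * (a * a^* + b * b^*) + nu * ((a - 'i * b) * (a - 'i * b)^*).
    by rewrite rmorphB rmorphM /= conjCi; ring: (@sqrCi C).
  apply: addr_ge0; last by rewrite mulr_ge0 ?mul_conjC_ge0.
  by rewrite mulr_ge0 ?subr_ge0 ?addr_ge0 ?mul_conjC_ge0.
move=> v; rewrite -[X in 0 <= X]/(qform _ v) -(vsubmxK v).
rewrite qformB qformZ qform_diag_block qform_Omega mulr_sumr -sumrB.
by apply: sumr_ge0 => j _; apply: term_ge0.
Qed.

(* [i Omega] fixes this vector. *)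
Definition Omega_eigvec (j : 'I_n) : 'cV[C]_(n + n) :=
  col_mx (delta_mx j 0) (- 'i *: delta_mx j 0).

Lemma qform_diag_block_eigvec (d : 'rV[C]_n) j :
  qform (block_mx (diag_mx d) 0 0 (diag_mx d)) (Omega_eigvec j) = 2 * d 0 j.
Proof.
rewrite qform_diag_block (bigD1 j) //= big1 => [|k kj]; last first.
  by rewrite !mxE (negbTE kj) /= !(mulr0, conjC0, mul0r, addr0).
rewrite !mxE eqxx /= addr0 !mulr1 rmorphN /= conjCi rmorph1.
by ring: (@sqrCi C).
Qed.

Lemma qform_Omega_eigvec j : qform Om (Omega_eigvec j) = - (2 * 'i).
Proof.
rewrite qform_Omega (bigD1 j) //= big1 => [|k kj]; last first.
  by rewrite !mxE (negbTE kj) /= !(mulr0, conjC0, mul0r, subr0).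
by rewrite !mxE eqxx /= addr0 !mulr1 rmorphN /= conjCi rmorph1; ring.
Qed.

End SymplecticForm.

Section Williamson.
Variables (C : numClosedFieldType) (n : nat).
Variables (V S : 'M[C]_(n + n)) (d : 'rV[C]_n).
Hypotheses (S_symplectic : symplectic S)
  (SVSt : S *m V *m S^T = block_mx (diag_mx d) 0 0 (diag_mx d)).
Local Notation Om := (Omega C n).

Lemma williamson_congr_subOmega (c : C) :
  S *m (V - c *: Om) *m S^T = block_mx (diag_mx d) 0 0 (diag_mx d) - c *: Om.
Proof.
by rewrite mulmxBr mulmxBl -scalemxAr -scalemxAl SVSt (proj2 S_symplectic).
Qed.

Lemma loewner_ge_williamson (nu : C) :
  0 <= nu -> (forall j, nu <= d 0 j) -> loewner_ge V (('i * nu) *: Om).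
Proof.
move=> nu_ge0 le_nu_d; case: (S_symplectic) => S_real _.
apply: (psd_congr S_real (symplectic_unitmx S_symplectic)).
by rewrite williamson_congr_subOmega; apply: psd_diag_block_subOmega.
Qed.

Lemma le_williamson_loewner_ge (lam : C) j :
  loewner_ge V (('i * lam) *: Om) -> lam <= d 0 j.
Proof.
case: (S_symplectic) => S_real _ [_ /(_ (S^T *m Omega_eigvec C j))].
rewrite -[X in 0 <= X -> _]/(qform _ _) qform_congr //.
rewrite williamson_congr_subOmega.
rewrite qformB qformZ qform_diag_block_eigvec qform_Omega_eigvec.
have -> : 2 * d 0 j - 'i * lam * - (2 * 'i) = 2 * (d 0 j - lam).
  by ring: (@sqrCi C).
by rewrite pmulr_rge0 // subr_ge0.
Qed.

Lemma williamson_mxtrace_witness j : exists W : 'M[C]_(n + n),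
  psd_mx W /\ \tr (W *m ('i *: Om)) = 1 /\ d 0 j = \tr (W *m V).
Proof.
case: (S_symplectic) => S_real SOSt.
set y := S^T *m Omega_eigvec C j.
have trW X : \tr (2^-1 *: (y *m y^t*) *m X) =
             2^-1 * qform (S *m X *m S^T) (Omega_eigvec C j).
  by rewrite -scalemxAl mxtraceZ mxtrace_mul_rank1 qform_congr.
have two_neq0 : (2 : C) != 0 by rewrite pnatr_eq0.
exists (2^-1 *: (y *m y^t*)); split; [|split].
- by apply: psd_scale_rank1; rewrite invr_ge0 ler0n.
- rewrite trW -scalemxAr -scalemxAl SOSt qformZ qform_Omega_eigvec.
  by rewrite (_ : 'i * - (2 * 'i) = 2); [rewrite mulVf | ring: (@sqrCi C)].
- by rewrite trW SVSt qform_diag_block_eigvec mulrA mulVf ?mul1r.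
Qed.

End Williamson.

Theorem propositionA6 (C : numClosedFieldType) (n : nat)
  (V : 'M[C]_(n + n)) (numin : C) :
  real_sym_pd V ->
  is_nu_min V numin ->
  is_max (fun lam : C => 0 <= lam /\ loewner_ge V ('i * lam *: Omega C n)) numin /\
  is_min (fun t : C => exists W : 'M[C]_(n + n),
            psd_mx W /\ \tr (W *m ('i *: Omega C n)) = 1 /\ t = \tr (W *m V))
         numin.
Proof.
move=> _ [d [[d_gt0 [S [S_symp SVSt]]] [[j0 dj0] le_nu_d]]].
have nu_ge0 : 0 <= numin by rewrite -dj0 ltW ?d_gt0.
have V_ge := loewner_ge_williamson S_symp SVSt nu_ge0 le_nu_d.
split; split.
- by split.
- by move=> lam [_ /(le_williamson_loewner_ge S_symp SVSt j0)]; rewrite dj0.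
- by rewrite -dj0; apply: williamson_mxtrace_witness S_symp SVSt j0.
- move=> _ [W [W_psd [WO1 ->]]]; apply: le_mxtrace_loewner_ge W_psd WO1.
  by rewrite scalerA mulrC.
Qed.
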